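(* Let $(Q,\cdot)$ be a left modular magma with a right unit $e$, and let $(Q,\ast)$ be a right modular magma with a left unit $\hat{e}$. Then $(Q,\cdot,\ast)$ is a double magma, i.e. $(x\cdot y)\ast(z\cdot w)=(x\ast z)\cdot(y\ast w)$ for all $x,y,z,w\in Q$, if and only if there is an involutive automorphism $\alpha$ of $(Q,\ast)$ such that $x\ast y=y\cdot\alpha x$ for all $x,y\in Q$.
   Context: A magma $(Q,\cdot)$ is left modular if $x(yz)=z(yx)$ and right modular if $(xy)z=(zy)x$ for all $x,y,z\in Q$. A right unit is an element $r$ with $xr=x$ for all $x$; a left unit is an element $l$ with $lx=x$ for all $x$. A mapping $\alpha:Q\to Q$ is involutive if $\alpha\circ\alpha$ is the identity map. *)

Definition left_modular {Q : Type} (op : Q -> Q -> Q) : Prop :=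
  forall x y z : Q, op x (op y z) = op z (op y x).

Definition right_modular {Q : Type} (op : Q -> Q -> Q) : Prop :=
  forall x y z : Q, op (op x y) z = op (op z y) x.

Definition right_unit {Q : Type} (op : Q -> Q -> Q) (r : Q) : Prop :=
  forall x : Q, op x r = x.

Definition left_unit {Q : Type} (op : Q -> Q -> Q) (l : Q) : Prop :=
  forall x : Q, op l x = x.

Definition involutive_map {Q : Type} (a : Q -> Q) : Prop :=
  forall x : Q, a (a x) = x.

Definition magma_automorphism {Q : Type} (op : Q -> Q -> Q) (a : Q -> Q) : Prop :=
  (forall x y : Q, a (op x y) = op (a x) (a y)) /\
  (forall x y : Q, a x = a y -> x = y) /\
  (forall y : Q, exists x : Q, a x = y).

Definition double_magma {Q : Type} (dot star : Q -> Q -> Q) : Prop :=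
  forall x y z w : Q, star (dot x y) (dot z w) = dot (star x z) (star y w).


(* With a right unit [e], left modularity gives [e . (x . y) = y . x], so [x |-> e . x] is an
   involution; dually [(x * y) * ehat = y * x] and [x |-> x * ehat] is an involution.  The
   interchange law at suitable arguments forces [e = ehat] and shows that
   [alpha x := e . (x * e)] is an involutive automorphism of [*] with [x * y = y . alpha x].
   Conversely, [alpha] then also respects [.], and the interchange law reduces to left
   modularity. *)

Section LeftModularWithRightUnit.

Context {Q : Type} {dot : Q -> Q -> Q} {e : Q}.
Hypotheses (Hdot : left_modular dot) (He : right_unit dot e).

Lemma left_modular_unit_swap (x y : Q) : dot x y = dot e (dot y x).
Proof. rewrite <- (Hdot x y e), He. reflexivity. Qed.

Lemma left_modular_unit_involutive (x : Q) : dot e (dot e x) = x.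
Proof. rewrite <- left_modular_unit_swap. apply He. Qed.

End LeftModularWithRightUnit.

Section RightModularWithLeftUnit.

Context {Q : Type} {star : Q -> Q -> Q} {u : Q}.
Hypotheses (Hstar : right_modular star) (Hu : left_unit star u).

Lemma right_modular_unit_swap (x y : Q) : star (star x y) u = star y x.
Proof. rewrite <- (Hstar u y x), Hu. reflexivity. Qed.

Lemma right_modular_unit_involutive (x : Q) : star (star x u) u = x.
Proof. rewrite right_modular_unit_swap. apply Hu. Qed.

End RightModularWithLeftUnit.

Section DoubleMagmaUnits.

Context {Q : Type} {dot star : Q -> Q -> Q} {e ehat : Q}.
Hypotheses (Hdot : left_modular dot) (He : right_unit dot e)
  (Hstar : right_modular star) (Hehat : left_unit star ehat)
  (D : double_magma dot star).

Lemma double_magma_left_unit : left_unit star e.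
Proof.
  intros w.
  assert (Hw : dot e w = dot e (star e w)).
  { pose proof (D ehat e e w) as H. rewrite He, !Hehat in H. exact H. }
  rewrite <- (left_modular_unit_involutive Hdot He (star e w)), <- Hw.
  apply left_modular_unit_involutive; assumption.
Qed.

Lemma double_magma_units_eq : e = ehat.
Proof.
  rewrite <- (right_modular_unit_involutive Hstar Hehat e).
  rewrite double_magma_left_unit, Hehat. reflexivity.
Qed.

End DoubleMagmaUnits.

Definition unit_twist {Q : Type} (dot star : Q -> Q -> Q) (e x : Q) : Q :=
  dot e (star x e).

Section DoubleMagmaCommonUnit.

Context {Q : Type} {dot star : Q -> Q -> Q} {e : Q}.
Hypotheses (Hdot : left_modular dot) (He : right_unit dot e)
  (Hstar : right_modular star) (Hstar_e : left_unit star e)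
  (D : double_magma dot star).

Local Notation unit_twist := (unit_twist dot star e).

Lemma star_dot_unit_l (x y : Q) : star x (dot e y) = dot (star x e) y.
Proof. pose proof (D x e e y) as H. rewrite He, Hstar_e in H. exact H. Qed.

Lemma star_dot_unit_r (x : Q) : star (dot e x) e = dot e (star x e).
Proof. pose proof (D e x e e) as H. rewrite He, Hstar_e in H. exact H. Qed.

Lemma unit_twist_involutive : involutive_map unit_twist.
Proof.
  intros x. unfold unit_twist.
  rewrite star_dot_unit_r, (left_modular_unit_involutive Hdot He).
  apply (right_modular_unit_involutive Hstar Hstar_e).
Qed.

Lemma unit_twist_morph (x y : Q) :
  unit_twist (star x y) = star (unit_twist x) (unit_twist y).
Proof.
  unfold unit_twist.
  rewrite (D e (star x e) e (star y e)), Hstar_e.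
  rewrite (right_modular_unit_swap Hstar Hstar_e), (Hstar x e (star y e)).
  rewrite (right_modular_unit_involutive Hstar Hstar_e). reflexivity.
Qed.

Lemma star_dot_unit_twist (x y : Q) : star x y = dot y (unit_twist x).
Proof.
  unfold unit_twist.
  rewrite Hdot, <- star_dot_unit_l, (left_modular_unit_involutive Hdot He).
  reflexivity.
Qed.

End DoubleMagmaCommonUnit.

Lemma involutive_morph_automorphism (Q : Type) (op : Q -> Q -> Q) (a : Q -> Q) :
  involutive_map a -> (forall x y : Q, a (op x y) = op (a x) (a y)) ->
  magma_automorphism op a.
Proof.
  intros Ha Hmorph. split; [exact Hmorph | split].
  - intros x y Hxy. rewrite <- (Ha x), <- (Ha y), Hxy. reflexivity.
  - intros y. exists (a y). apply Ha.
Qed.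

Section TwistedDoubleMagma.

Context {Q : Type} {dot star : Q -> Q -> Q} {alpha : Q -> Q}.
Hypotheses (Hdot : left_modular dot) (Hinv : involutive_map alpha)
  (Hmorph : forall x y : Q, alpha (star x y) = star (alpha x) (alpha y))
  (Htwist : forall x y : Q, star x y = dot y (alpha x)).

(* [x . y] is [alpha y * x], and [alpha] respects [*]. *)
Lemma twist_morph_dot (x y : Q) : alpha (dot x y) = dot (alpha x) (alpha y).
Proof.
  pose proof (Htwist (alpha y) x) as Hy. rewrite Hinv in Hy.
  rewrite <- Hy, Hmorph, Hinv, Htwist. reflexivity.
Qed.

Lemma twist_double_magma : double_magma dot star.
Proof.
  intros x y z w. rewrite !Htwist, twist_morph_dot.
  rewrite (Hdot (dot z w)), (Hdot (alpha x) z w), (Hdot (dot z (alpha x)) w (alpha y)).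
  reflexivity.
Qed.

End TwistedDoubleMagma.

Theorem theorem5p4 (Q : Type) (dot star : Q -> Q -> Q) (e ehat : Q)
  (Hdot : left_modular dot) (He : right_unit dot e)
  (Hstar : right_modular star) (Hehat : left_unit star ehat) :
  double_magma dot star <->
  exists alpha : Q -> Q,
    magma_automorphism star alpha /\ involutive_map alpha /\
    (forall x y : Q, star x y = dot y (alpha x)).
Proof.
  split.
  - intros D.
    pose proof (double_magma_units_eq Hdot He Hstar Hehat D) as Hunit.
    subst ehat.
    exists (unit_twist dot star e).
    split; [| split].
    + apply involutive_morph_automorphism.
      * exact (unit_twist_involutive Hdot He Hstar Hehat D).
      * exact (unit_twist_morph Hstar Hehat D).
    + exact (unit_twist_involutive Hdot He Hstar Hehat D).
    + exact (star_dot_unit_twist Hdot He Hehat D).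
  - intros [alpha [[Hmorph _] [Hinv Htwist]]].
    exact (twist_double_magma Hdot Hinv Hmorph Htwist).
Qed.
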